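(* Let $k\ge 2$ be even and $i\in\{1,\ldots,k-1\}$ such that $\binom{k}{i}$ and $\binom{k-1}{i}$ are both odd. Then $$S=\sum_{\substack{0\le \ell\le k-i-2\\ \ell\text{ even}}}\binom{k-i}{\ell}\binom{i-2}{k-i-\ell-2}^2$$ is odd.
   Context: Convention: for integers $a,b$, $\binom{a}{b}=0$ unless $0\le b\le a$. *)

From mathcomp Require Import all_boot all_order all_algebra.
Set Implicit Arguments. Unset Strict Implicit. Unset Printing Implicit Defensive.

(* Binomial coefficient on integers with the paper's convention:
   binomZ a b = 0 unless 0 <= b <= a, in which case it is the usual 'C(a, b). *)
Definition binomZ (a b : int) : nat :=
  match a, b with
  | Posz a', Posz b' => 'C(a', b')
  | _, _ => 0
  end.

From mathcomp Require Import all_boot all_order all_algebra.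
From mathcomp Require Import zify.

Set Implicit Arguments.
Unset Strict Implicit.
Unset Printing Implicit Defensive.

(* Modulo 2 the squares disappear and, for [m] even, the terms with odd [l] vanish
   (an even row of Pascal's triangle has even entries in odd positions, as
   [n * 'C(n.-1, j) = j.+1 * 'C(n, j.+1)] shows). What is left is a Vandermonde
   convolution, so [S] has the parity of ['C(k - 2, i)]; and since [i] is even,
   ['C(k - 1, i) = 'C(k - 2, i - 1) + 'C(k - 2, i)] has the same parity. *)

Lemma odd_bin_even n m : ~~ odd n -> odd m -> ~~ odd 'C(n, m).
Proof.
case: m => [|j] // even_n odd_j1.
have := congr1 odd (mul_bin_diag n j).
by rewrite !oddM (negbTE even_n) odd_j1 /= => <-.
Qed.

Lemma odd_sum (I : Type) (r : seq I) (P : pred I) (F : I -> nat) :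
  odd (\sum_(l <- r | P l) F l) = \big[addb/false]_(l <- r | P l) odd (F l).
Proof. by apply: big_morph; [exact: oddD|]. Qed.

Lemma odd_binS_even n j :
  ~~ odd n -> odd j -> odd 'C(n.+1, j.+1) = odd 'C(n, j.+1).
Proof. by move=> even_n odd_j; rewrite binS oddD (negbTE (odd_bin_even even_n odd_j)) addbF. Qed.

Lemma odd_Vandermonde_even_sq m n p : ~~ odd m ->
  odd (\sum_(l < p.+1 | ~~ odd l) 'C(m, l) * 'C(n, p - l) ^ 2) = odd 'C(m + n, p).
Proof.
move=> even_m; rewrite -binomial.Vandermonde !odd_sum [RHS](bigID (fun l : 'I_p.+1 => ~~ odd l)) /=.
rewrite [X in _ = _ (+) X]big1 ?addbF; last first.
  by move=> l /negPn odd_l; rewrite oddM (negbTE (odd_bin_even even_m odd_l)).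
by apply: eq_bigr => l _; rewrite !oddM andbb.
Qed.

Theorem mainTheorem11 (k i : nat) :
  2 <= k -> ~~ odd k -> 1 <= i <= k - 1 ->
  odd 'C(k, i) -> odd 'C(k - 1, i) ->
  odd (\sum_(0 <= l < k - i - 1 | ~~ odd l)
         binomZ (Posz (k - i)) (Posz l) *
         binomZ (Posz i - 2)%R (Posz k - Posz i - Posz l - 2)%R ^ 2).
Proof.
move=> k_ge2 even_k /andP[i_ge1 i_lt_k] odd_Cki odd_Ck1i.
have even_i : ~~ odd i by apply: contraL odd_Cki; apply: odd_bin_even.
have {i_ge1} [j def_i] : exists j, i = j.+2.
  by case: i even_i i_ge1 {i_lt_k odd_Cki odd_Ck1i} => [|[|j]] //; exists j.
have even_ki : ~~ odd (k - i) by rewrite oddB ?(negbTE even_k) ?(negbTE even_i) //; lia.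
have ki_ge2 : 2 <= k - i.
  have : 1 <= k - i by lia.
  by move: even_ki; case: (k - i) => [|[|]].
have -> : k - i - 1 = (k - i - 2).+1 by lia.
rewrite big_mkord (eq_bigr (fun l : 'I__ => 'C(k - i, l) * 'C(j, k - i - 2 - l) ^ 2)).
  rewrite odd_Vandermonde_even_sq //.
  have -> : 'C(k - i + j, k - i - 2) = 'C(k - 2, i).
    by rewrite -bin_sub; [congr 'C(_, _) |]; lia.
  have even_k2 : ~~ odd (k - 2) by rewrite oddB ?(negbTE even_k).
  move: odd_Ck1i; have -> : k - 1 = (k - 2).+1 by lia.
  by rewrite def_i odd_binS_even //=; rewrite def_i /= negbK in even_i.
move=> l _; have lt_l := ltn_ord l.
have -> : (Posz i - 2 = Posz j)%R by lia.
by have -> : (Posz k - Posz i - Posz l - 2 = Posz (k - i - 2 - l))%R by lia.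
Qed.
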